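(* Let $H \in \mathbb{Z}^{k \times n}$, $b^\star \in \mathbb{R}^k$ and $b \in \mathbb{Z}^k$, and suppose there exists $x^\star \in [0,1]^n$ with $Hx^\star = b^\star$ such that $x^\star$ has at most $\varphi$ fractional entries (entries not in $\{0,1\}$), where $\varphi$ is a nonnegative integer. If the system $Hz = b$, $z \in \{0,1\}^n$ has a solution, then there exists a solution $\hat{z} \in \{0,1\}^n$ of $H\hat z = b$ with \[ \|x^\star - \hat{z}\|_1 \leq \left( \left\lceil \frac{\|b^\star - b\|_\infty}{\|H\|_\infty} \right\rceil + \varphi + 1 \right) (2k \|H\|_\infty + 1)^k. \]
   Context: For a matrix $H$, $\|H\|_\infty$ denotes the maximum absolute value of an entry of $H$; for vectors, $\|\cdot\|_1$ and $\|\cdot\|_\infty$ are the usual $\ell_1$- and $\ell_\infty$-norms. *)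

From mathcomp Require Import all_boot all_order all_algebra.
Set Implicit Arguments. Unset Strict Implicit. Unset Printing Implicit Defensive.
Import Order.TTheory GRing.Theory Num.Theory.
Local Open Scope ring_scope.

(* ||H||_inf : maximum absolute value of an entry of an integer matrix (as a nat). *)
Definition mx_entry_max (k n : nat) (H : 'M[int]_(k, n)) : nat :=
  (\max_(i < k) \max_(j < n) `|H i j|%N)%N.

Definition vnorm_inf (R : realFieldType) (k : nat) (v : 'cV[R]_k) : R :=
  \big[Num.max/0]_(i < k) `|v i 0|.

Definition vnorm_1 (R : realFieldType) (n : nat) (v : 'cV[R]_n) : R :=
  \sum_(i < n) `|v i 0|.

Definition is_binary (n : nat) (z : 'cV[int]_n) : Prop :=
  forall i, z i 0 = 0 \/ z i 0 = 1.

From mathcomp Require Import all_boot all_order all_algebra.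
From mathcomp Require Import lra zify.
Import Order.TTheory GRing.Theory Num.Theory.
Set Implicit Arguments. Unset Strict Implicit. Unset Printing Implicit Defensive.
Local Open Scope ring_scope.

(* Take a 0/1 solution [z] of [H z = b] for which the set of integral
   coordinates of [x*] where [z] disagrees with [x*] is inclusion-minimal.
   The columns of [H] weighted by [z_i - x*_i] over the coordinates where [z]
   and [x*] differ, together with [c] copies of [(b* - b)/c], where
   [c = ceil(||b* - b||_inf / ||H||_inf)], sum to zero and have entries bounded by
   [||H||_inf]; by the Steinitz lemma they can be ordered so that every prefix sum
   lies in the box of radius [k ||H||_inf].  A prefix sum is an integral vector
   plus the sum of the first [q] nonintegral vectors (fractional coordinates and
   copies of [(b* - b)/c]).  Two prefixes with the same [q] and the same integral
   part enclose a block of integral coordinates whose columns cancel; resetting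
   [z] to [x*] on that block contradicts minimality.  Otherwise pigeonhole over the
   [(c + phi + 1) (2 k ||H||_inf + 1)^k] possible pairs bounds the number of
   vectors, hence [||x* - z||_1]. *)

Lemma big_subset_supp (V : nmodType) (I : finType) (A B : {set I}) (g : I -> V) :
  B \subset A -> (forall i, i \notin B -> g i = 0) ->
  \sum_(i in A) g i = \sum_(i in B) g i.
Proof.
move=> sBA g0; rewrite (big_setID B) /= (setIidPr sBA) [X in _ + X]big1 ?addr0 //.
by move=> i; rewrite inE => /andP [/g0].
Qed.

Lemma affine_dependence (R : fieldType) (I : finType) (k : nat)
    (v : I -> 'I_k -> R) (F : {set I}) :
  (k.+1 < #|F|)%N ->
  exists w : I -> R, [/\ forall i, i \notin F -> w i = 0, exists i, w i != 0,
    forall l, \sum_(i in F) w i * v i l = 0 & \sum_(i in F) w i = 0].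
Proof.
move=> ltkF.
have [i0 Fi0] : exists i0, i0 \in F.
  by apply/set0Pn; rewrite -card_gt0 (leq_ltn_trans _ ltkF).
pose M : 'M[R]_(#|F|, k + 1) :=
  row_mx (\matrix_(r, l) v (enum_val r) l) (const_mx 1).
have [r0 nz_u] : exists r0, row r0 (kermx M) != 0.
  have nzK : kermx M != 0.
    rewrite kermx_eq0 /row_free; apply: contraTneq ltkF => rkM.
    by rewrite -leqNgt -addn1 -rkM rank_leq_col.
  apply/existsP; apply: contraNT nzK => /existsPn nz; apply/eqP/row_matrixP => r.
  by rewrite row0; apply/eqP; move: (nz r); rewrite negbK.
set u := row r0 (kermx M) in nz_u.
have : u *m M = 0 by apply/sub_kermxP; exact: row_sub.
rewrite mul_mx_row -row_mx0 => /eq_row_mx [uv u1].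
pose w i := if i \in F then u 0 (enum_rank_in Fi0 i) else 0.
have w_enum r : w (enum_val r) = u 0 r by rewrite /w (enum_valP r) enum_valK_in.
exists w; split.
- by move=> i /negbTE Fi; rewrite /w Fi.
- have [j nz_uj] : exists j, u 0 j != 0.
    apply/existsP; apply: contraNT nz_u => /existsPn nz; apply/eqP/rowP => j.
    by move: (nz j); rewrite negbK => /eqP ->; rewrite mxE.
  by exists (enum_val j); rewrite w_enum.
- move=> l; rewrite big_enum_val.
  move/matrixP/(_ 0 l): uv; rewrite !mxE; apply: etrans.
  by apply: eq_bigr => r _; rewrite w_enum !mxE.
rewrite big_enum_val.
move/matrixP/(_ 0 0): u1; rewrite !mxE; apply: etrans.
by apply: eq_bigr => r _; rewrite w_enum !mxE mulr1.
Qed.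

Section BoxExit.
Variable R : realFieldType.

(* For [w != 0], the largest [t] with [m + t * w] in [0, 1]. *)
Definition box_exit (m w : R) : R := if 0 < w then (1 - m) / w else m / - w.

Lemma box_exit_gt0 m w : 0 < m < 1 -> w != 0 -> 0 < box_exit m w.
Proof.
move=> /andP [m0 m1] nzw; rewrite /box_exit; case: ifP => w0.
  by rewrite divr_gt0 // subr_gt0.
by rewrite divr_gt0 // oppr_gt0 lt_neqAle nzw leNgt w0.
Qed.

Lemma box_exit_mul m w : w != 0 ->
  box_exit m w * w = if 0 < w then 1 - m else - m.
Proof.
by move=> nzw; rewrite /box_exit; case: ifP => _; rewrite ?invrN ?mulrN ?mulNr divfK.
Qed.

Lemma shift_in_unit m w t : 0 <= m <= 1 -> w != 0 ->
  0 <= t <= box_exit m w -> 0 <= m + t * w <= 1.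
Proof.
move=> /andP [m0 m1] nzw /andP [t0 tle].
have := box_exit_mul m nzw; case: (ltP 0 w) => w0 e.
  have : t * w <= box_exit m w * w by rewrite ler_wpM2r // ltW.
  have : 0 <= t * w by rewrite mulr_ge0 // ltW.
  by rewrite e => *; apply/andP; split; lra.
have : box_exit m w * w <= t * w by rewrite ler_wnM2r.
have : t * w <= 0 by rewrite mulr_ge0_le0.
by rewrite e => *; apply/andP; split; lra.
Qed.

Lemma shift_box_exit_integral m w : w != 0 -> ~~ (0 < m + box_exit m w * w < 1).
Proof.
move=> nzw; rewrite box_exit_mul //; case: ifP => _.
  by rewrite addrC subrK ltxx andbF.
by rewrite subrr ltxx.
Qed.

End BoxExit.

Section Caratheodory.
Variables (R : realFieldType) (I : finType) (k : nat) (v : I -> 'I_k -> R).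

Definition frac_set (A : {set I}) (mu : I -> R) : {set I} :=
  [set i in A | 0 < mu i < 1].

Definition unit_box (A : {set I}) (mu : I -> R) :=
  forall i, i \in A -> 0 <= mu i <= 1.

Definition same_moments (A : {set I}) (mu mu' : I -> R) :=
  (forall l, \sum_(i in A) mu' i * v i l = \sum_(i in A) mu i * v i l) /\
  \sum_(i in A) mu' i = \sum_(i in A) mu i.

Lemma frac_setS A mu : frac_set A mu \subset A.
Proof. by apply/subsetP => i; rewrite inE => /andP []. Qed.

Lemma reduce_frac_step A mu : unit_box A mu -> (k.+1 < #|frac_set A mu|)%N ->
  exists2 mu', unit_box A mu' /\ same_moments A mu mu' &
    (#|frac_set A mu'| < #|frac_set A mu|)%N.
Proof.
set F := frac_set A mu => box ltkF.
have [w [w0 [j nzwj] wv ws]] := affine_dependence v ltkF.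
have wF i : w i != 0 -> i \in F by apply: contraR => /w0 ->.
have FP i : i \in F -> (i \in A) && (0 < mu i < 1) by rewrite /F inE.
pose S := [set i in F | w i != 0].
have Sj : j \in S by rewrite inE wF.
have [i0 Si0 min_i0] := arg_minP (fun i => box_exit (mu i) (w i)) Sj.
have : i0 \in S := Si0; rewrite inE => /andP [Fi0 nzwi0].
set eps := box_exit (mu i0) (w i0) in min_i0.
have eps_gt0 : 0 < eps by apply: box_exit_gt0 => //; case/andP: (FP _ Fi0).
pose mu' i := mu i + eps * w i.
have sumA (g : I -> R) : \sum_(i in A) w i * g i = \sum_(i in F) w i * g i.
  by apply: big_subset_supp; [exact: frac_setS | move=> i /w0 ->; rewrite mul0r].
exists mu'; first split.
- move=> i Ai; have [wi0|nzw] := eqVneq (w i) 0.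
    by rewrite /mu' wi0 mulr0 addr0 box.
  apply: shift_in_unit => //; first exact: box.
  have Si : i \in S by rewrite inE wF.
  by rewrite ltW //=; apply: min_i0.
- split=> [l|]; rewrite /mu'.
    under eq_bigr do rewrite mulrDl -mulrA.
    by rewrite big_split /= -mulr_sumr sumA wv mulr0 addr0.
  rewrite big_split /= -mulr_sumr (big_subset_supp (frac_setS A mu) w0).
  by rewrite ws mulr0 addr0.
have sub : frac_set A mu' \subset F :\ i0.
  apply/subsetP => i; rewrite !inE => /andP [Ai frac'].
  have [wi0|nzw] := eqVneq (w i) 0.
    move: frac'; rewrite /mu' wi0 mulr0 addr0 => ->; rewrite Ai !andbT.
    by apply: contraNneq nzwi0 => <-; rewrite wi0.
  have /andP [-> ->] := FP _ (wF _ nzw); rewrite !andbT.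
  by apply: contraTneq frac' => ->; exact: shift_box_exit_integral.
by apply: leq_ltn_trans (subset_leq_card sub) _; rewrite (cardsD1 i0 F) Fi0.
Qed.

Lemma reduce_frac A mu : unit_box A mu ->
  exists2 mu', unit_box A mu' /\ same_moments A mu mu' &
    (#|frac_set A mu'| <= k.+1)%N.
Proof.
have [N] := ubnP #|frac_set A mu|; elim: N mu => // N IH mu ltN box.
have [small|big] := leqP #|frac_set A mu| k.+1; first by exists mu.
have [mu1 [box1 [v1 s1]] lt1] := reduce_frac_step box big.
have [mu2 [box2 [v2 s2]] small] := IH mu1 (leq_trans lt1 ltN) box1.
by exists mu2 => //; split=> //; split=> [l|]; rewrite ?v2 ?v1 ?s2 ?s1.
Qed.

Lemma vertex_has_zero (A : {set I}) (mu : I -> R) m :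
  #|A| = (m.+1 + k)%N -> unit_box A mu -> (#|frac_set A mu| <= k.+1)%N ->
  \sum_(i in A) mu i = m%:R -> exists2 i, i \in A & mu i = 0.
Proof.
move=> cardA box small summ.
have [/exists_inP [i Ai /eqP]|] := boolP [exists i in A, mu i == 0]; first by exists i.
move=> /exists_inPn nz; exfalso.
set F := frac_set A mu in small.
have pos i : i \in A -> 0 < mu i.
  by move=> Ai; rewrite lt_def nz //=; case/andP: (box i Ai).
have sumA : \sum_(i in A) mu i = #|A :\: F|%:R + \sum_(i in F) mu i.
  rewrite (big_setID F) /= (setIidPr (frac_setS A mu)) addrC -sum1_card natr_sum.
  congr (_ + _); apply: eq_bigr => i /setDP [Ai FNi].
  have /andP [_ mu_le1] := box i Ai.
  apply/eqP; rewrite eq_le mu_le1 leNgt; apply: contra FNi => lt1.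
  by rewrite inE Ai pos // lt1.
have [F0 | [i Fi]] := set_0Vmem F.
  move: summ; rewrite sumA F0 big_set0 addr0 setD0 cardA => /eqP.
  by rewrite eqr_nat addSn gtn_eqF // ltnS leq_addr.
have lemAF : (m <= #|A :\: F|)%N.
  by rewrite cardsD (setIidPr (frac_setS A mu)) cardA; move: small; rewrite /F; lia.
have : mu i <= \sum_(j in F) mu j.
  rewrite (bigD1 i) //= lerDl sumr_ge0 // => j /andP [Fj _].
  by case/andP: (box j (subsetP (frac_setS A mu) _ Fj)).
have := pos i (subsetP (frac_setS A mu) _ Fi).
move: lemAF summ; rewrite sumA -(ler_nat R); lra.
Qed.

End Caratheodory.

Section Steinitz.
Variables (R : realFieldType) (I : finType) (k : nat) (v : I -> 'I_k -> R) (D : R).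
Hypotheses (D_ge0 : 0 <= D) (v_le : forall i l, `|v i l| <= D).

Definition steinitz_ordering (A : {set I}) (s : seq I) :=
  [/\ uniq s, s =i A & forall j l, `|\sum_(i <- take j s) v i l| <= k%:R * D].

Lemma norm_sum_seq_le (t : seq I) l : `|\sum_(i <- t) v i l| <= (size t)%:R * D.
Proof.
elim: t => [|i t IH]; first by rewrite big_nil normr0 mul0r.
rewrite big_cons /= -addn1 natrD mulrDl mul1r addrC.
by apply: le_trans (ler_normD _ _) _; apply: lerD.
Qed.

Lemma small_steinitz_ordering (A : {set I}) :
  (#|A| <= k)%N -> steinitz_ordering A (enum A).
Proof.
move=> smallA; split=> [||j l]; [exact: enum_uniq | exact: mem_enum |].
apply: le_trans (norm_sum_seq_le _ _) _; apply: ler_wpM2r => //.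
by rewrite ler_nat size_take_min -cardE geq_min smallA orbT.
Qed.

Lemma norm_sum_le_of_balanced (A : {set I}) (lam : I -> R) m :
  #|A| = (m + k)%N -> unit_box A lam ->
  (forall l, \sum_(i in A) lam i * v i l = 0) -> \sum_(i in A) lam i = m%:R ->
  forall l, `|\sum_(i in A) v i l| <= k%:R * D.
Proof.
move=> cardA box lamv suml l.
have -> : \sum_(i in A) v i l = \sum_(i in A) (1 - lam i) * v i l.
  by under [RHS]eq_bigr do rewrite mulrBl mul1r; rewrite sumrB lamv subr0.
apply: le_trans (ler_norm_sum _ _ _) _.
apply: (@le_trans _ _ (\sum_(i in A) (1 - lam i) * D)).
  apply: ler_sum => i Ai; have /andP [_ lam1] := box i Ai.
  by rewrite normrM ger0_norm ?subr_ge0 // ler_wpM2l ?subr_ge0.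
by rewrite -mulr_suml sumrB suml sumr_const cardA natrD addrC addKr.
Qed.

(* Grinberg--Sevastyanov: rescale the weights to total [m], move to a vertex of
   the polytope of weights with the same moments; some element then has weight
   [0], and it is put last. *)
Lemma steinitz_weighted m (A : {set I}) (lam : I -> R) :
  #|A| = (m + k)%N -> unit_box A lam ->
  (forall l, \sum_(i in A) lam i * v i l = 0) -> \sum_(i in A) lam i = m%:R ->
  exists s, steinitz_ordering A s.
Proof.
elim: m A lam => [|m IH] A lam cardA box lamv suml.
  by exists (enum A); apply: small_steinitz_ordering; rewrite cardA.
pose c : R := m%:R / m.+1%:R.
have box_c : unit_box A (fun i => lam i * c).
  move=> i Ai; have /andP [l0 l1] := box i Ai.
  have /andP [c0 c1] : 0 <= c <= 1.
    by rewrite divr_ge0 //= ler_pdivrMr ?mul1r ?ler_nat // ltr0Sn.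
  by apply/andP; split; [apply: mulr_ge0 | apply: mulr_ile1].
have [mu [mu_box [muv mus]] mu_frac] := reduce_frac v box_c.
have mus' : \sum_(i in A) mu i = m%:R.
  by rewrite mus -mulr_suml suml mulrC divfK // pnatr_eq0.
have [i0 Ai0 mu_i0] := vertex_has_zero cardA mu_box mu_frac mus'.
pose A' := A :\ i0.
have cardA' : #|A'| = (m + k)%N.
  by move: cardA; rewrite (cardsD1 i0 A) Ai0 add1n addSn => [[]].
have sumA' (g : I -> R) : \sum_(i in A) mu i * g i = \sum_(i in A') mu i * g i.
  by rewrite (big_setD1 i0 Ai0) /= mu_i0 mul0r add0r.
have box' : unit_box A' mu.
  by move=> i /setD1P [_ Ai]; exact: mu_box.
have muv' l : \sum_(i in A') mu i * v i l = 0.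
  by rewrite -sumA' muv; under eq_bigr do rewrite mulrAC; rewrite -mulr_suml lamv mul0r.
have mus'' : \sum_(i in A') mu i = m%:R.
  by rewrite -mus' (big_setD1 i0 Ai0) /= mu_i0 add0r.
have [s' [uniq_s' mem_s' bound_s']] := IH A' mu cardA' box' muv' mus''.
have uniq_s : uniq (rcons s' i0) by rewrite rcons_uniq mem_s' !inE eqxx.
have mem_s i : (i \in rcons s' i0) = (i \in A).
  by rewrite mem_rcons in_cons mem_s' !inE; case: eqVneq => [->|].
exists (rcons s' i0); split=> // j l.
rewrite -cats1 take_cat; case: ltnP => [lt_j|le_j]; first exact: bound_s'.
case: (j - size s')%N => [|j']; first by rewrite take0 cats0 -(take_size s').
rewrite /= cats1 big_uniq //= (eq_bigl _ _ mem_s).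
exact: norm_sum_le_of_balanced cardA box lamv suml l.
Qed.

Lemma steinitz (A : {set I}) : (forall l, \sum_(i in A) v i l = 0) ->
  exists s, steinitz_ordering A s.
Proof.
move=> sumv; have [smallA|bigA] := leqP #|A| k.
  by exists (enum A); apply: small_steinitz_ordering.
have cardA : #|A| = ((#|A| - k) + k)%N by rewrite subnK // ltnW.
pose c : R := (#|A| - k)%:R / #|A|%:R.
have nzA : #|A|%:R != 0 :> R by rewrite pnatr_eq0 -lt0n (leq_ltn_trans _ bigA).
apply: (@steinitz_weighted _ A (fun _ => c) cardA).
- move=> i _; rewrite divr_ge0 //= ler_pdivrMr ?mul1r ?ler_nat ?leq_subr //.
  by rewrite lt_def nzA /=.
- by move=> l; rewrite -mulr_sumr sumv mulr0.
by rewrite sumr_const -[_ *+ #|A|]mulr_natr /c divfK.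
Qed.

End Steinitz.

Lemma filter_take (T : Type) (p : pred T) (s : seq T) j :
  filter p (take j s) = take (count p (take j s)) (filter p s).
Proof.
elim: s j => [|x s IH] [|j] //=; first by rewrite take0.
by case: ifP => px /=; rewrite IH.
Qed.

Lemma int_box_pigeonhole (N C W k : nat) (c : 'I_N -> nat)
    (Y : 'I_N -> 'I_k -> int) (a : nat -> 'I_k -> int) :
  (forall j, c j <= C)%N -> (forall j l, a (c j) l <= Y j l <= a (c j) l + W%:Z) ->
  (N <= C.+1 * W.+1 ^ k)%N \/
  exists j1 j2 : 'I_N, [/\ (j1 < j2)%N, c j1 = c j2 & Y j1 =1 Y j2].
Proof.
move=> c_le Y_box.
have Y_abs j l : `|Y j l - a (c j) l|%N = (Y j l - a (c j) l) :> int.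
  by rewrite gez0_abs // subr_ge0; case/andP: (Y_box j l).
have Y_lt j l : (`|Y j l - a (c j) l|%N < W.+1)%N.
  by rewrite ltnS -lez_nat Y_abs lerBlDl; case/andP: (Y_box j l).
pose f j : 'I_C.+1 * {ffun 'I_k -> 'I_W.+1} :=
  (inord (c j), [ffun l => inord `|Y j l - a (c j) l|%N]).
have [/injectiveP f_inj | /injectivePn [j1 [j2 ne12 f12]]] := boolP (injectiveb f).
  by left; have := leq_card f f_inj; rewrite card_prod card_ffun !card_ord.
right.
have c12 : c j1 = c j2.
  by move: f12 => [/(congr1 val)]; rewrite /= !inordK ?ltnS.
have Y12 : Y j1 =1 Y j2.
  move=> l; move: f12 => [_ /ffunP/(_ l)/(congr1 val)].
  rewrite !ffunE /= !inordK // => /(congr1 Posz); rewrite !Y_abs c12.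
  by move/addIr.
case: (ltngtP j1 j2) => [lt12|gt12|eq12].
- by exists j1, j2.
- by exists j2, j1; split=> // l; rewrite Y12.
- by case/eqP: ne12; apply: val_inj.
Qed.

Section PrefixPigeonhole.
Variables (R : archiRealFieldType) (I : Type) (k Δ : nat) (v : I -> 'I_k -> R).
Variables (nonint : pred I) (vint : I -> 'I_k -> int).
Hypothesis v_int : forall x l, ~~ nonint x -> v x l = (vint x l)%:~R.

Lemma prefix_pigeonhole (s : seq I) :
  (forall j l, `|\sum_(x <- take j s) v x l| <= k%:R * Δ%:R) ->
  (size s < (count nonint s).+1 * (2 * k * Δ).+1 ^ k)%N \/
  exists s1 blk s2, [/\ s = s1 ++ blk ++ s2, (0 < size blk)%N,
    all (predC nonint) blk & forall l, \sum_(x <- blk) vint x l = 0].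
Proof.
move=> prefix_le.
(* A prefix sum is the integral vector [Y j] plus the sum [Q (cnt j)] of the
   first [cnt j] nonintegral vectors, so [Y j] lies in a box fixed by [cnt j]. *)
pose cnt (j : 'I_(size s).+1) := count nonint (take j s).
pose Y (j : 'I_(size s).+1) l : int := \sum_(x <- take j s | ~~ nonint x) vint x l.
pose Q q l : R := \sum_(x <- take q (filter nonint s)) v x l.
pose a q l : int := Num.ceil (- (k%:R * Δ%:R) - Q q l).
have Y_box j l : a (cnt j) l <= Y j l <= a (cnt j) l + (2 * k * Δ)%N%:Z.
  have split_sum : \sum_(x <- take j s) v x l = (Y j l)%:~R + Q (cnt j) l.
    rewrite (bigID nonint) /= addrC; congr (_ + _).
      by rewrite rmorph_sum; apply: eq_bigr => x /v_int.
    by rewrite -big_filter filter_take.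
  have := prefix_le j l; rewrite split_sum ler_norml => /andP [lo hi].
  have := ceil_ge (- (k%:R * Δ%:R) - Q (cnt j) l); rewrite -/(a _ l) => a_ge.
  rewrite ceil_le_int /= -(ler_int R) rmorphD /= -[(Posz _)%:~R]/(_%:R : R) !natrM; lra.
have cnt_le j : (cnt j <= count nonint s)%N.
  by rewrite /cnt -[X in (_ <= count _ X)%N](cat_take_drop j s) count_cat leq_addr.
have [small | [j1 [j2 [lt12 c12 Y12]]]] := int_box_pigeonhole cnt_le Y_box.
  by left.
right; set blk := take (j2 - j1) (drop j1 s).
have take2 : take j2 s = take j1 s ++ blk by rewrite -takeD subnKC // ltnW.
have blk_np : all (predC nonint) blk.
  move: c12; rewrite /cnt take2 count_cat -{1}[count _ (take j1 s)]addn0.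
  by move/addnI/esym/eqP; rewrite all_predC has_count lt0n negbK.
exists (take j1 s), blk, (drop j2 s); split=> //.
- by rewrite catA -take2 cat_take_drop.
- by rewrite size_take_min size_drop; move: (ltn_ord j2) lt12; lia.
move=> l; rewrite -(all_filterP blk_np) big_filter.
by move: (Y12 l); rewrite /Y take2 big_cat /= -[LHS]addr0 => /addrI.
Qed.

End PrefixPigeonhole.

Definition frac_supp (R : realFieldType) n (x : 'cV[R]_n) : {set 'I_n} :=
  [set i | (x i ord0 != 0%R) && (x i ord0 != 1%R)].

(* Equal to [x] on the integral coordinates of [x]; junk on the others. *)
Definition round01 (R : realFieldType) n (x : 'cV[R]_n) (i : 'I_n) : int :=
  if x i 0 == 1 then 1 else 0.

Definition mismatch (R : realFieldType) n (x : 'cV[R]_n) (z : 'cV[int]_n) :=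
  [set i | (i \notin frac_supp x) && (z i 0 != round01 x i)].

Lemma round01E (R : realFieldType) n (x : 'cV[R]_n) i :
  i \notin frac_supp x -> x i 0 = (round01 x i)%:~R.
Proof.
rewrite inE negb_and !negbK /round01 => /orP [] /eqP ->; last by rewrite eqxx.
by rewrite eq_sym oner_eq0.
Qed.

Lemma mx_entry_max_ge k n (H : 'M[int]_(k, n)) l i : (`|H l i| <= mx_entry_max H)%N.
Proof.
apply: leq_trans (leq_bigmax l).
exact: (@leq_bigmax _ (fun j => `|H l j|%N) i).
Qed.

Section Exchange.
Variables (R : archiRealFieldType) (k n : nat) (H : 'M[int]_(k, n)).
Variables (bstar : 'cV[R]_k) (b : 'cV[int]_k) (xstar : 'cV[R]_n) (cn : nat).
Hypothesis xstar01 : forall i, 0 <= xstar i 0 <= 1.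
Hypothesis Hxstar : map_mx intr H *m xstar = bstar.
Hypothesis bstar_near : forall l,
  `|bstar l 0 - (b l 0)%:~R| <= cn%:R * (mx_entry_max H)%:R.

Local Notation Δ := (mx_entry_max H).
Local Notation F := (frac_supp xstar).

Section OneSolution.
Variable z : 'cV[int]_n.
Hypotheses (z01 : is_binary z) (Hz : H *m z = b).

Definition dev (x : 'I_n + 'I_cn) (l : 'I_k) : R :=
  if x is inl i then ((z i 0)%:~R - xstar i 0) * (H l i)%:~R
  else (bstar l 0 - (b l 0)%:~R) / cn%:R.

Definition dev_set : {set 'I_n + 'I_cn} :=
  [set x | if x is inl i then (i \in F) || (z i 0 != round01 xstar i) else true].

Definition nonint (x : 'I_n + 'I_cn) : bool := if x is inl i then i \in F else true.

Definition dev_int (x : 'I_n + 'I_cn) (l : 'I_k) : int :=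
  if x is inl i then (z i 0 - round01 xstar i) * H l i else 0.

Lemma intr_z01 i : 0 <= ((z i 0)%:~R : R) <= 1.
Proof. by case: (z01 i) => ->; rewrite ?ler01 ?lexx. Qed.

Lemma dev_le x l : `|dev x l| <= Δ%:R.
Proof.
case: x => [i|j] /=.
  rewrite normrM -[Δ%:R]mul1r; apply: ler_pM => //.
    have := intr_z01 i; have := xstar01 i => /andP [? ?] /andP [? ?].
    by rewrite ler_norml; apply/andP; split; lra.
  by rewrite -intr_norm -natr_absz ler_nat mx_entry_max_ge.
have cn_gt0 : (0 < cn)%N by apply: leq_ltn_trans (ltn_ord j).
by rewrite normrM normfV normr_nat ler_pdivrMr ?ltr0n // mulrC.
Qed.

Lemma dev_intE x l : ~~ nonint x -> dev x l = (dev_int x l)%:~R.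
Proof. by case: x => [i|j] //= /round01E ->; rewrite intrM intrB. Qed.

Lemma sum_dev l : \sum_(x in dev_set) dev x l = 0.
Proof.
rewrite big_sumType /=.
have -> : \sum_(i | inl i \in dev_set) dev (inl i) l = (b l 0)%:~R - bstar l 0.
  rewrite big_mkcond /= -Hz -Hxstar !mxE rmorph_sum -sumrB; apply: eq_bigr => i _.
  rewrite !mxE inE /= intrM mulrC -mulrBr.
  case: ifP => // /negbT; rewrite negb_or negbK => /andP [/round01E -> /eqP ->].
  by rewrite subrr mulr0.
have -> : \sum_(j | inr j \in dev_set) dev (inr j) l = bstar l 0 - (b l 0)%:~R.
  rewrite (eq_bigl predT) => [|j]; last by rewrite inE.
  rewrite sumr_const card_ord; have [cn0|cn_gt0] := posnP cn.
    by move: (bstar_near l); rewrite cn0 mul0r normr_le0 => /eqP ->.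
  by rewrite -[_ *+ cn]mulr_natr divfK // pnatr_eq0 -lt0n.
by rewrite addrA subrK subrr.
Qed.

Lemma count_nonint s : uniq s -> s =i dev_set -> (count nonint s <= cn + #|F|)%N.
Proof.
move=> uniq_s mem_s.
rewrite -size_filter -(card_uniqP (filter_uniq _ uniq_s)).
apply: (@leq_trans #|[pred x | nonint x]|).
  by apply: subset_leq_card; apply/subsetP => x; rewrite !inE mem_filter => /andP [].
by rewrite -[#|[pred x | nonint x]|]sum1_card big_sumType /= !sum1_card card_ord addnC.
Qed.

Lemma dist_le_card : vnorm_1 (xstar - map_mx intr z) <= #|dev_set|%:R.
Proof.
apply: (@le_trans _ _ #|[set i | inl i \in dev_set]|%:R).
  rewrite -sum1_card natr_sum big_mkcond /=; apply: ler_sum => i _; rewrite inE !mxE.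
  case: ifP => [_|/negbT]; last first.
    by rewrite inE negb_or negbK => /andP [/round01E -> /eqP ->]; rewrite subrr normr0.
  have := intr_z01 i; have := xstar01 i => /andP [? ?] /andP [? ?].
  by rewrite ler_norml; apply/andP; split; lra.
rewrite ler_nat -(card_imset _ (@inl_inj 'I_n 'I_cn)); apply: subset_leq_card.
by apply/subsetP => y /imsetP [i]; rewrite inE => dev_i ->.
Qed.

Lemma exchange blk : uniq blk -> {subset blk <= dev_set} -> (0 < size blk)%N ->
  all (predC nonint) blk -> (forall l, \sum_(x <- blk) dev_int x l = 0) ->
  exists2 z', is_binary z' /\ H *m z' = b &
    mismatch xstar z' \proper mismatch xstar z.
Proof.
move=> uniq_blk sub_blk blk0 blk_np blk_sum.
pose z' := \col_i (if inl i \in blk then round01 xstar i else z i 0).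
have /hasP [x0 blk_x0 _] : has predT blk by rewrite has_predT.
have := allP blk_np x0 blk_x0; case: x0 blk_x0 => [i0|//] blk_i0 /= i0F.
exists z'; first split.
- move=> i; rewrite mxE; case: ifP => _; last exact: z01.
  by rewrite /round01; case: ifP; [right|left].
- apply/matrixP => l j; rewrite ord1 -Hz !mxE; apply/eqP; rewrite -subr_eq0 -sumrB.
  move: (blk_sum l); rewrite big_uniq //= big_sumType /= [X in _ + X]big1 // addr0.
  rewrite big_mkcond /= => blk_sum_l.
  rewrite (eq_bigr (fun i =>
    - if inl i \in blk then (z i 0 - round01 xstar i) * H l i else 0)).
    by rewrite sumrN blk_sum_l oppr0.
  move=> i _; rewrite mxE; case: ifP => _; last by rewrite subrr oppr0.
  by rewrite -mulrBr -mulNr opprB mulrC.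
apply/properP; split.
  apply/subsetP => i; rewrite !inE mxE => /andP [-> /=].
  by case: ifP => //; rewrite eqxx.
exists i0; last by rewrite inE mxE blk_i0 eqxx andbF.
have := sub_blk _ blk_i0; rewrite inE /= (negbTE i0F) /= => mis_i0.
by rewrite [_ \in mismatch _ _]inE i0F.
Qed.

Lemma exchange_or_close :
  (exists2 z', is_binary z' /\ H *m z' = b &
     mismatch xstar z' \proper mismatch xstar z) \/
  vnorm_1 (xstar - map_mx intr z) <= ((cn + #|F|).+1 * (2 * k * Δ).+1 ^ k)%N%:R.
Proof.
have [s [uniq_s mem_s bound_s]] := steinitz (ler0n R Δ) dev_le sum_dev.
have [short | [s1 [blk [s2 [def_s blk0 blk_np blk_sum]]]]] :=
  prefix_pigeonhole dev_intE bound_s.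
  right; apply: le_trans dist_le_card _; rewrite ler_nat.
  rewrite -(eq_card mem_s) (card_uniqP uniq_s); apply: ltnW (leq_trans short _).
  by rewrite leq_mul2r ltnS count_nonint ?orbT.
left; apply: exchange blk0 blk_np blk_sum.
  by move: uniq_s; rewrite def_s !cat_uniq => /and3P [_ _ /andP []].
by move=> x blk_x; rewrite -mem_s def_s !mem_cat blk_x orbT.
Qed.

End OneSolution.

Lemma close_solution z : is_binary z -> H *m z = b ->
  exists zh : 'cV[int]_n, [/\ is_binary zh, H *m zh = b &
    vnorm_1 (xstar - map_mx intr zh) <= ((cn + #|F|).+1 * (2 * k * Δ).+1 ^ k)%N%:R].
Proof.
have [N] := ubnP #|mismatch xstar z|; elim: N z => // N IH z ltN z01 Hz.
have [[z' [z'01 Hz'] lt_z'] | close] := exchange_or_close z01 Hz; last by exists z.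
exact: IH (leq_trans (proper_card lt_z') ltN) z'01 Hz'.
Qed.

End Exchange.

Lemma vnorm_inf_ge (R : realFieldType) k (u : 'cV[R]_k) l : `|u l 0| <= vnorm_inf u.
Proof. exact: (@le_bigmax _ _ _ 0 (fun i : 'I_k => `|u i 0|) l). Qed.

Lemma ceil_vnorm_inf_ge0 (R : archiRealFieldType) k (u : 'cV[R]_k) d :
  0 <= d -> 0 <= Num.ceil (vnorm_inf u / d).
Proof.
move=> d0; rewrite ceil_ge0 (lt_le_trans (ltrN10 _)) // divr_ge0 //.
by rewrite /vnorm_inf; elim/big_ind: _ => // x y x0 y0; rewrite le_max x0.
Qed.

Lemma rhs_gap_le_ceil (R : archiRealFieldType) k n (H : 'M[int]_(k, n))
    (bstar : 'cV[R]_k) (b : 'cV[int]_k) (x : 'cV[R]_n) (z : 'cV[int]_n) :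
  map_mx intr H *m x = bstar -> H *m z = b -> forall l,
  `|bstar l 0 - (b l 0)%:~R| <=
    (Num.ceil (vnorm_inf (bstar - map_mx intr b) / (mx_entry_max H)%:R))%:~R
    * (mx_entry_max H)%:R.
Proof.
move=> Hx Hz l; have [Δ0|Δ_gt0] := posnP (mx_entry_max H).
  have H0 l' i : H l' i = 0.
    by apply/eqP; rewrite -absz_eq0 -leqn0 -Δ0 mx_entry_max_ge.
  rewrite -Hz -Hx !mxE !big1 ?subrr ?normr0 ?Δ0 ?mulr0 // => i _;
    by rewrite ?mxE H0 mul0r.
have := ceil_itv (vnorm_inf (bstar - map_mx intr b) / (mx_entry_max H)%:R).
rewrite ler_pdivrMr ?ltr0n // => /andP [_]; apply: le_trans.
by have := vnorm_inf_ge (bstar - map_mx intr b) l; rewrite !mxE.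
Qed.

Theorem mainTheorem2 (R : archiRealFieldType) (k n : nat)
  (H : 'M[int]_(k, n)) (bstar : 'cV[R]_k) (b : 'cV[int]_k) (phi : nat)
  (xstar : 'cV[R]_n)
  (hx01 : forall i, 0 <= xstar i 0 <= 1)
  (hHx : map_mx intr H *m xstar = bstar)
  (hfrac : (#|[set i | (xstar i ord0 != 0%R) && (xstar i ord0 != 1%R)]| <= phi)%N)
  (hsol : exists z : 'cV[int]_n, is_binary z /\ H *m z = b) :
  exists zh : 'cV[int]_n, is_binary zh /\ H *m zh = b /\
    vnorm_1 (xstar - map_mx intr zh) <=
      ((Num.ceil (vnorm_inf (bstar - map_mx intr b) / (mx_entry_max H)%:R))%:~R
        + phi%:R + 1)
      * ((2 * k * mx_entry_max H + 1)%:R) ^+ k.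
Proof.
have [z [z01 Hz]] := hsol.
set c := Num.ceil _.
have cnE : (`|c|%N%:R : R) = c%:~R.
  by rewrite natr_absz ger0_norm // ceil_vnorm_inf_ge0.
have bstar_near l : `|bstar l 0 - (b l 0)%:~R| <= `|c|%N%:R * (mx_entry_max H)%:R.
  by rewrite cnE; exact: rhs_gap_le_ceil hHx Hz l.
have [zh [zh01 Hzh close]] := close_solution hx01 hHx bstar_near z01 Hz.
exists zh; split=> //; split=> //; apply: le_trans close _.
rewrite natrM natrX addn1 ler_wpM2r ?exprn_ge0 //.
by rewrite -addn1 !natrD cnE lerD2r lerD2l ler_nat.
Qed.
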